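(* In the setting described in the context, let $\delta\in(0,\tfrac{\sqrt2}{2})$ with $\lambda_Ka_K-\lambda_1a_1\delta>0$, let $\bar\eta>0$ satisfy $g(\mathbf Q)-g(\mathbf X)\ge\bar\eta\,d_F^2(\mathbf X,\mathbf Q)$ for all $\mathbf X\in\mathrm{St}(d,K)$, set $\delta_1=\delta^2\bar\eta$, and let $\beta_3>0$ satisfy $g(\mathbf Q)-g(\mathbf X)\le\beta_3 d_F^2(\mathbf X,\mathbf Q)$ for all $\mathbf X\in\mathrm{St}(d,K)$. Let $\mathbf X^0=[\mathbf x_1^0,\dots,\mathbf x_K^0]$, where $\mathbf x_j^0$ is a unit eigenvector of $\mathbf C$ associated with its $j$-th largest eigenvalue, $j\in[K]$ (the $K$ principal eigenvectors of $\mathbf C$). If $$\|\mathbf C-\mathbb E[\mathbf C]\|^2\le\frac{\delta_1}{8\beta_3\sum_{j=1}^K 1/\min^2\{\lambda_{j-1}-\lambda_j,\lambda_j-\lambda_{j+1}\}},$$ with the conventions $\lambda_0=+\infty$ and $\lambda_{K+1}=0$, then $g(\mathbf Q)-g(\mathbf X^0)\le\delta_1$.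
   Context: $d>K\ge1$, $\mathrm{St}(d,K)=\{\mathbf X\in\mathbb R^{d\times K}:\mathbf X^\top\mathbf X=\mathbf I_K\}$, $\mathbf Q\in\mathrm{St}(d,K)$, $\lambda_1>\dots>\lambda_K>0$, $\boldsymbol\Theta=\mathrm{diag}(\sqrt{\lambda_1},\dots,\sqrt{\lambda_K})$. Integers $L\ge1$, $n_1,\dots,n_L\ge1$, $n=\sum_ln_l$; $v_1>\dots>v_L>0$; data $\mathbf y_{l,i}=\mathbf Q\boldsymbol\Theta\mathbf z_{l,i}+\boldsymbol\eta_{l,i}\in\mathbb R^d$ ($l\in[L],i\in[n_l]$) with $\mathbf z_{l,i}$ i.i.d. $\mathcal N(\mathbf0,\mathbf I_K)$ independent of $\boldsymbol\eta_{l,i}$ i.i.d. $\mathcal N(\mathbf0,v_l\mathbf I_d)$. Sample covariance $\mathbf C=\frac1n\sum_{l=1}^L\sum_{i=1}^{n_l}\mathbf y_{l,i}\mathbf y_{l,i}^\top$, with $\mathbb E[\mathbf C]=\mathbf Q\boldsymbol\Theta^2\mathbf Q^\top+\sum_{l=1}^L\frac{n_l}{n}v_l\mathbf I_d$; $\|\cdot\|$ is the operator norm. $w_{l,k}=\lambda_k/(\lambda_k+v_l)$, $a_k=\sum_lw_{l,k}\frac{n_l}{n}\frac1{v_l}$, $g(\mathbf X)=\mathrm{tr}(\mathbf X^\top\mathbf Q\boldsymbol\Theta^2\mathbf Q^\top\mathbf X\,\mathrm{diag}(a_1,\dots,a_K))$, $d_F(\mathbf X,\mathbf Q)=\min_{\mathbf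 q\in\{\pm1\}^K}\|\mathbf X-\mathbf Q\,\mathrm{diag}(\mathbf q)\|_F$. *)

From HB Require Import structures.
From mathcomp Require Import all_boot all_order all_algebra.
From mathcomp Require Import classical_sets reals.
Set Implicit Arguments. Unset Strict Implicit. Unset Printing Implicit Defensive.
Import Order.TTheory GRing.Theory Num.Theory.
Local Open Scope ring_scope.
Local Open Scope classical_set_scope.

Section Defs.
Variable R : realType.

Definition vnorm (p : nat) (x : 'cV[R]_p) : R :=
  Num.sqrt (\sum_(i < p) (x i 0) ^+ 2).

Definition frob (p q : nat) (A : 'M[R]_(p, q)) : R :=
  Num.sqrt (\sum_(i < p) \sum_(j < q) (A i j) ^+ 2).

Definition opnorm (p q : nat) (A : 'M[R]_(p, q)) : R :=
  sup [set vnorm (A *m x) | x in [set x : 'cV[R]_q | vnorm x = 1]].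

Definition stiefel (d K : nat) (X : 'M[R]_(d, K)) : Prop := X^T *m X = 1%:M.

Definition signmx (K : nat) (s : {ffun 'I_K -> bool}) : 'M[R]_K :=
  diag_mx (\row_k (if s k then -1 else 1)).

(* d_F(X,Q) = min_{q in {+-1}^K} ||X - Q diag(q)||_F
   (the seed value frob (X - Q) is itself the term for q = (1,...,1)) *)
Definition dF (d K : nat) (X Q : 'M[R]_(d, K)) : R :=
  \big[Num.min/frob (X - Q)]_(s : {ffun 'I_K -> bool}) frob (X - Q *m signmx s).

(* Theta = diag(sqrt lam_1, ..., sqrt lam_K); lam is 1-indexed *)
Definition Theta (K : nat) (lam : nat -> R) : 'M[R]_K :=
  diag_mx (\row_(k < K) Num.sqrt (lam k.+1)).

Definition ntot (L : nat) (nl : nat -> nat) : nat := (\sum_(1 <= l < L.+1) nl l)%N.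

Definition wlk (lam v : nat -> R) (l k : nat) : R := lam k / (lam k + v l).

Definition ak (L : nat) (nl : nat -> nat) (lam v : nat -> R) (k : nat) : R :=
  \sum_(1 <= l < L.+1) wlk lam v l k * ((nl l)%:R / (ntot L nl)%:R) * (v l)^-1.

Definition gfun (d K L : nat) (nl : nat -> nat) (lam v : nat -> R)
    (Q X : 'M[R]_(d, K)) : R :=
  \tr (X^T *m Q *m (Theta K lam *m Theta K lam) *m Q^T *m X
        *m diag_mx (\row_(k < K) ak L nl lam v k.+1)).

Definition ydat (d K : nat) (Q : 'M[R]_(d, K)) (lam : nat -> R)
    (z : nat -> nat -> 'cV[R]_K) (eta : nat -> nat -> 'cV[R]_d) (l i : nat)
    : 'cV[R]_d :=
  Q *m Theta K lam *m z l i + eta l i.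

(* sample covariance C = (1/n) sum_l sum_{i<n_l} y y^T  (i = 1..n_l shifted to 0..n_l-1) *)
Definition Csample (d K L : nat) (nl : nat -> nat) (Q : 'M[R]_(d, K))
    (lam : nat -> R) (z : nat -> nat -> 'cV[R]_K) (eta : nat -> nat -> 'cV[R]_d)
    : 'M[R]_d :=
  ((ntot L nl)%:R)^-1 *:
    \sum_(1 <= l < L.+1) \sum_(i < nl l)
       (ydat Q lam z eta l i *m (ydat Q lam z eta l i)^T).

Definition ECov (d K L : nat) (nl : nat -> nat) (Q : 'M[R]_(d, K))
    (lam v : nat -> R) : 'M[R]_d :=
  Q *m (Theta K lam *m Theta K lam) *m Q^T
  + (\sum_(1 <= l < L.+1) ((nl l)%:R / (ntot L nl)%:R) * v l)%:M.

(* min{lam_{j-1}-lam_j, lam_j-lam_{j+1}} with lam_0 = +oo, lam_{K+1} = 0, j = 1..K *)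
Definition gapmin (K : nat) (lam : nat -> R) (j : nat) : R :=
  let right := lam j - (if j == K then 0 else lam j.+1) in
  if j == 1%N then right else Num.min (lam j.-1 - lam j) right.

(* X^0 consists of the K principal eigenvectors of the symmetric matrix C:
   there is an orthonormal eigenbasis V of C with eigenvalues mu sorted in
   nonincreasing order (C = V diag(mu) V^T), and the j-th column of X0 is the
   j-th column of V (a unit eigenvector for the j-th largest eigenvalue). *)
Definition principal_eigvecs (d K : nat) (hKd : (K <= d)%N)
    (C : 'M[R]_d) (X0 : 'M[R]_(d, K)) : Prop :=
  exists (V : 'M[R]_d) (mu : 'I_d -> R),
    [/\ V^T *m V = 1%:M,
        C = V *m diag_mx (\row_i mu i) *m V^T,
        (forall i j : 'I_d, (i <= j)%N -> mu j <= mu i) &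
        (forall (i : 'I_d) (j : 'I_K), X0 i j = V i (widen_ord hKd j))].

End Defs.

From HB Require Import structures.
From mathcomp Require Import all_boot all_order all_algebra.
From mathcomp Require Import classical_sets reals.
From mathcomp Require Import ring lra zify.
Import Order.TTheory GRing.Theory Num.Theory.
Local Open Scope ring_scope.

(* Let e = ||C - E[C]||, write C = V diag(mu) V^T and E[C] = Q diag(lam) Q^T + s I.
   By Weyl's inequality the j-th eigenvalue mu_j of C lies within e of lam_j + s.
   Expanding the residual ||(E[C] - mu_j) x_j|| <= e of the j-th principal
   eigenvector in the columns of Q gives, when the eigengap g_j exceeds 2e, the
   sin-theta bound (g_j - e)^2 (1 - c_j^2) <= e^2 for the cosine c_j between x_j
   and q_j; in every case (2 - 2|c_j|) g_j^2 <= 8 e^2.  Flipping the signs of the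
   columns of Q so that all cosines are nonnegative,
   d_F(X^0, Q)^2 <= sum_j (2 - 2|c_j|) <= 8 e^2 sum_j 1/g_j^2,
   and the quadratic upper bound g(Q) - g(X) <= beta_3 d_F(X, Q)^2 concludes. *)

Set Implicit Arguments. Unset Strict Implicit. Unset Printing Implicit Defensive.

Section InnerProduct.
Variable R : realDomainType.

Definition dot n (u w : 'cV[R]_n) : R := (u^T *m w) 0 0.

Lemma dotE n (u w : 'cV[R]_n) : dot u w = \sum_i u i 0 * w i 0.
Proof. by rewrite /dot mxE; apply: eq_bigr => i _; rewrite mxE. Qed.

Lemma dotC n (u w : 'cV[R]_n) : dot u w = dot w u.
Proof. by rewrite !dotE; apply: eq_bigr => i _; rewrite mulrC. Qed.

Lemma dotDl n (u v w : 'cV[R]_n) : dot (u + v) w = dot u w + dot v w.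
Proof. by rewrite /dot linearD /= mulmxDl mxE. Qed.

Lemma dotZl n a (u w : 'cV[R]_n) : dot (a *: u) w = a * dot u w.
Proof. by rewrite /dot linearZ /= -scalemxAl mxE. Qed.

Lemma dotNl n (u w : 'cV[R]_n) : dot (- u) w = - dot u w.
Proof. by rewrite -scaleN1r dotZl mulN1r. Qed.

Lemma dotBl n (u v w : 'cV[R]_n) : dot (u - v) w = dot u w - dot v w.
Proof. by rewrite dotDl dotNl. Qed.

Lemma dotDr n (u v w : 'cV[R]_n) : dot w (u + v) = dot w u + dot w v.
Proof. by rewrite dotC dotDl !(dotC w). Qed.

Lemma dotZr n a (u w : 'cV[R]_n) : dot w (a *: u) = a * dot w u.
Proof. by rewrite dotC dotZl dotC. Qed.

Lemma dotBr n (u v w : 'cV[R]_n) : dot w (u - v) = dot w u - dot w v.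
Proof. by rewrite dotC dotBl !(dotC w). Qed.

Lemma dot_mulmx m n (A : 'M[R]_(m, n)) (u : 'cV[R]_m) (w : 'cV[R]_n) :
  dot u (A *m w) = dot (A^T *m u) w.
Proof. by rewrite /dot trmx_mul trmxK mulmxA. Qed.

Lemma dot_col m n p (A : 'M[R]_(m, n)) (B : 'M[R]_(m, p)) i j :
  dot (col i A) (col j B) = (A^T *m B) i j.
Proof. by rewrite /dot !mxE; apply: eq_bigr => k _; rewrite !mxE. Qed.

Lemma dot_delta_mxr n (y : 'cV[R]_n) (j : 'I_n) : dot y (delta_mx j 0) = y j 0.
Proof. by rewrite /dot -colE !mxE. Qed.

Lemma dot_delta_mx n (j : 'I_n) : dot (delta_mx j 0) (delta_mx j 0) = 1 :> R.
Proof. by rewrite dot_delta_mxr mxE !eqxx. Qed.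

Lemma dotvv n (y : 'cV[R]_n) : dot y y = \sum_i y i 0 ^+ 2.
Proof. by rewrite dotE; apply: eq_bigr => i _; rewrite expr2. Qed.

Lemma dot_diag_mx n (r : 'I_n -> R) (y : 'cV[R]_n) :
  dot y (diag_mx (\row_i r i) *m y) = \sum_i r i * y i 0 ^+ 2.
Proof.
by rewrite dotE; apply: eq_bigr => i _; rewrite mul_diag_mx !mxE mulrCA expr2.
Qed.

Lemma dotvv_ge0 n (y : 'cV[R]_n) : 0 <= dot y y.
Proof. by rewrite dotvv; apply: sumr_ge0 => i _; apply: sqr_ge0. Qed.

Lemma dotvv_eq0 n (y : 'cV[R]_n) : (dot y y == 0) = (y == 0).
Proof.
apply/eqP/eqP => [y0|->]; last by rewrite /dot mulmx0 mxE.
apply/matrixP => i j; rewrite (ord1 j) mxE.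
have := psumr_eq0P (fun i _ => sqr_ge0 (y i 0)) (etrans (esym (dotvv y)) y0) (i := i) isT.
by move/eqP; rewrite sqrf_eq0 => /eqP.
Qed.

Lemma dotvv_gt0 n (y : 'cV[R]_n) : (0 < dot y y) = (y != 0).
Proof. by rewrite lt_def dotvv_eq0 dotvv_ge0 andbT. Qed.

Lemma cauchy_schwarz n (u w : 'cV[R]_n) : dot u w ^+ 2 <= dot u u * dot w w.
Proof.
set a := dot u u; set b := dot u w; set c := dot w w.
have := dotvv_ge0 (b *: u - a *: w).
rewrite !(dotBl, dotBr, dotZl, dotZr) -/a -/b -/c (dotC w u) -/b => h.
have [a0|a_neq0] := eqVneq a 0.
  have b0 : b = 0.
    by move: a0 => /eqP; rewrite dotvv_eq0 /b => /eqP ->; rewrite /dot trmx0 mul0mx mxE.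
  by rewrite a0 b0 expr0n mul0r.
have a_gt0 : 0 < a by rewrite lt_def a_neq0 dotvv_ge0.
nra.
Qed.

End InnerProduct.

Section Norms.
Variable R : realType.
Local Open Scope classical_set_scope.

Lemma vnorm_ge0 n (x : 'cV[R]_n) : 0 <= vnorm x.
Proof. exact: sqrtr_ge0. Qed.

Lemma vnorm_sqr n (x : 'cV[R]_n) : vnorm x ^+ 2 = dot x x.
Proof. by rewrite /vnorm sqr_sqrtr -dotvv ?dotvv_ge0. Qed.

Lemma vnorm0 n : vnorm (0 : 'cV[R]_n) = 0.
Proof. by rewrite /vnorm big1 ?sqrtr0 // => i _; rewrite mxE expr2 mulr0. Qed.

Lemma vnormZ n a (x : 'cV[R]_n) : vnorm (a *: x) = `|a| * vnorm x.
Proof.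
rewrite /vnorm (eq_bigr (fun i => a ^+ 2 * x i 0 ^+ 2)); last first.
  by move=> i _; rewrite mxE exprMn.
by rewrite -mulr_sumr sqrtrM ?sqr_ge0 // sqrtr_sqr.
Qed.

Lemma vnormN n (x : 'cV[R]_n) : vnorm (- x) = vnorm x.
Proof. by rewrite -scaleN1r vnormZ normrN1 mul1r. Qed.

Lemma vnorm_mulmx_le_frob p q (A : 'M[R]_(p, q)) x :
  vnorm x = 1 -> vnorm (A *m x) <= frob A.
Proof.
move=> x1; rewrite /vnorm /frob ler_sqrt; last first.
  by apply: sumr_ge0 => i _; apply: sumr_ge0 => j _; apply: sqr_ge0.
apply: ler_sum => i _.
have -> : (A *m x) i 0 = dot (row i A)^T x.
  by rewrite dotE mxE; apply: eq_bigr => j _; rewrite !mxE.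
have -> : \sum_j A i j ^+ 2 = dot (row i A)^T (row i A)^T.
  by rewrite dotvv; apply: eq_bigr => j _; rewrite !mxE.
by have := cauchy_schwarz (row i A)^T x; rewrite -(vnorm_sqr x) x1 expr1n mulr1.
Qed.

Lemma vnorm_mulmx_le p q (A : 'M[R]_(p, q)) x : vnorm (A *m x) <= opnorm A * vnorm x.
Proof.
have A_bounded : has_ubound [set vnorm (A *m x) | x in [set x | vnorm x = 1]].
  by exists (frob A) => _ [y y1 <-]; apply: vnorm_mulmx_le_frob.
have [->|x_neq0] := eqVneq x 0.
  by rewrite mulmx0 !vnorm0 mulr0.
have x_gt0 : 0 < vnorm x.
  by rewrite lt_def vnorm_ge0 andbT -sqrf_eq0 vnorm_sqr dotvv_eq0.
have x1 : vnorm ((vnorm x)^-1 *: x) = 1.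
  by rewrite vnormZ ger0_norm ?invr_ge0 ?vnorm_ge0 // mulVf ?gt_eqF.
have := ub_le_sup A_bounded (ex_intro2 _ _ _ x1 erefl).
rewrite -scalemxAr vnormZ ger0_norm ?invr_ge0 ?vnorm_ge0 //.
by rewrite -ler_pdivrMr // mulrC.
Qed.

Lemma opnorm_ge0 p q (A : 'M[R]_(p, q)) : 0 <= opnorm A.
Proof.
case: q A => [|q] A.
  rewrite /opnorm (_ : [set _ | _ in _] = set0) ?sup0 //.
  apply/seteqP; split => // y [x x1 _]; move: x1.
  by rewrite /= /vnorm big_ord0 sqrtr0 => /eqP; rewrite eq_sym oner_eq0.
have e1 : vnorm (delta_mx 0 0 : 'cV[R]_q.+1) = 1.
  by rewrite -[LHS]ger0_norm ?vnorm_ge0 // -sqrtr_sqr vnorm_sqr dot_delta_mx sqrtr1.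
apply: le_trans (vnorm_ge0 (A *m delta_mx 0 0)) _.
by have := vnorm_mulmx_le A (delta_mx 0 0); rewrite e1 mulr1.
Qed.

Lemma opnormN p q (A : 'M[R]_(p, q)) : opnorm (- A) = opnorm A.
Proof.
rewrite /opnorm; congr sup; apply/seteqP; split => _ [x x1 <-];
  by exists x => //; rewrite mulNmx vnormN.
Qed.

Lemma dotvv_mulmx_le p q (A : 'M[R]_(p, q)) x :
  dot (A *m x) (A *m x) <= opnorm A ^+ 2 * dot x x.
Proof.
rewrite -!vnorm_sqr -exprMn lerXn2r ?nnegrE ?mulr_ge0 ?vnorm_ge0 ?opnorm_ge0 //.
exact: vnorm_mulmx_le.
Qed.

Lemma quad_le_opnorm n (A : 'M[R]_n) y : `|dot y (A *m y)| <= opnorm A * dot y y.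
Proof.
have := cauchy_schwarz y (A *m y); have := dotvv_mulmx_le A y.
have := dotvv_ge0 y; have := dotvv_ge0 (A *m y); have := opnorm_ge0 A.
set b := dot y (A *m y); set a := dot y y; set c := dot (A *m y) _; set e := opnorm A.
move=> e0 c0 a0 ce bac.
rewrite -(ger0_norm (mulr_ge0 e0 a0)) -ler_sqr ?nnegrE // -!normrX !ger0_norm ?sqr_ge0 //.
nra.
Qed.

Lemma quad_gap_le n (A B : 'M[R]_n) y a b : y != 0 ->
  a * dot y y <= dot y (A *m y) -> dot y (B *m y) <= b * dot y y ->
  a - b <= opnorm (A - B).
Proof.
rewrite -dotvv_gt0 => y_gt0 hA hB.
have := quad_le_opnorm (A - B) y; rewrite mulmxBl dotBr ler_norml => /andP[_ hAB].
by rewrite -(ler_pM2r y_gt0); lra.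
Qed.

End Norms.

Section SortedWeights.
Variables (R : realDomainType) (n : nat) (w u : 'I_n -> R) (k : 'I_n).
Hypothesis w_sorted : forall i j : 'I_n, (i <= j)%N -> w j <= w i.

Lemma sum_sorted_le_tail : (forall i : 'I_n, (i < k)%N -> u i = 0) ->
  \sum_i w i * u i ^+ 2 <= w k * \sum_i u i ^+ 2.
Proof.
move=> u_head; rewrite mulr_sumr; apply: ler_sum => i _.
have [ik|ki] := ltnP i k; first by rewrite u_head // expr2 !mulr0.
by apply: ler_wpM2r; [apply: sqr_ge0 | apply: w_sorted].
Qed.

Lemma sum_sorted_ge_head : (forall i : 'I_n, (k < i)%N -> u i = 0) ->
  w k * \sum_i u i ^+ 2 <= \sum_i w i * u i ^+ 2.
Proof.
move=> u_tail; rewrite mulr_sumr; apply: ler_sum => i _.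
have [ki|ik] := ltnP k i; first by rewrite u_tail // expr2 !mulr0.
by apply: ler_wpM2r; [apply: sqr_ge0 | apply: w_sorted].
Qed.

End SortedWeights.

Lemma exists_kernel_vector_head (F : fieldType) n (k : 'I_n) (A : 'M[F]_n) :
  exists c : 'cV[F]_n, [/\ c != 0,
    forall i : 'I_n, (i < k)%N -> (A *m c) i 0 = 0 &
    forall i : 'I_n, (k < i)%N -> c i 0 = 0].
Proof.
pose M : 'M[F]_n := \matrix_(i, l)
  if (i < k)%N then A i l else if i == k then 0 else (i == l)%:R.
have : \det M^T == 0.
  by rewrite det_tr (expand_det_row M k) big1 // => l _; rewrite mxE ltnn eqxx mul0r.
case/det0P => v v_neq0 vM; exists v^T.
have Mc i : (M *m v^T) i 0 = 0.
  by rewrite -[M]trmxK -trmx_mul vM !mxE.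
split => [|i ik|i ki]; first by rewrite trmx_eq0.
  by rewrite -(Mc i) !mxE; apply: eq_bigr => l _; rewrite !mxE ik.
have := Mc i; rewrite mxE (bigD1 i) //= big1 => [|l li]; last first.
  by rewrite !mxE ltnNge (ltnW ki) gt_eqF // eq_sym (negbTE li) mul0r.
by rewrite !mxE ltnNge (ltnW ki) gt_eqF // eqxx mul1r addr0.
Qed.

Section Isometry.
Variables (R : realDomainType) (m n : nat) (Q : 'M[R]_(m, n)).
Hypothesis hQ : Q^T *m Q = 1%:M.

Lemma dot_isometry (c : 'cV[R]_n) : dot (Q *m c) (Q *m c) = dot c c.
Proof. by rewrite dot_mulmx mulmxA hQ mul1mx. Qed.

Lemma bessel (y : 'cV[R]_m) : dot (Q^T *m y) (Q^T *m y) <= dot y y.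
Proof.
set c := Q^T *m y.
have yQc : dot y (Q *m c) = dot c c by rewrite dot_mulmx.
have := dotvv_ge0 (y - Q *m c).
by rewrite dotBl !dotBr dot_isometry yQc (dotC (Q *m c) y) yQc; lra.
Qed.

End Isometry.

Section QuadraticForms.
Variable R : realDomainType.

Definition spiked_cov d K (Q : 'M[R]_(d, K)) (r : 'I_K -> R) (s : R) : 'M[R]_d :=
  Q *m diag_mx (\row_i r i) *m Q^T + s%:M.

Lemma quad_spiked_cov d K (Q : 'M[R]_(d, K)) r s (y : 'cV[R]_d) :
  dot y (spiked_cov Q r s *m y) = \sum_l r l * (Q^T *m y) l 0 ^+ 2 + s * dot y y.
Proof.
by rewrite mulmxDl dotDr mul_scalar_mx dotZr -!mulmxA dot_mulmx dot_diag_mx.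
Qed.

Lemma quad_conj_diag n (V : 'M[R]_n) (mu : 'I_n -> R) (y : 'cV[R]_n) :
  dot y (V *m diag_mx (\row_i mu i) *m V^T *m y) = \sum_i mu i * (V^T *m y) i 0 ^+ 2.
Proof. by rewrite -!mulmxA dot_mulmx dot_diag_mx. Qed.

End QuadraticForms.

Section Weyl.
Variables (R : realType) (d K : nat) (hKd : (K <= d)%N).
Variables (Q : 'M[R]_(d, K)) (r : 'I_K -> R) (s : R) (V : 'M[R]_d) (mu : 'I_d -> R).
Hypothesis hQ : Q^T *m Q = 1%:M.
Hypothesis hV : V^T *m V = 1%:M.
Hypothesis r_ge0 : forall i, 0 <= r i.
Hypothesis r_sorted : forall i j : 'I_K, (i <= j)%N -> r j <= r i.
Hypothesis mu_sorted : forall i j : 'I_d, (i <= j)%N -> mu j <= mu i.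

Notation C := (V *m diag_mx (\row_i mu i) *m V^T).
Notation Sig := (spiked_cov Q r s).

Lemma dot_trV (y : 'cV[R]_d) : dot (V^T *m y) (V^T *m y) = dot y y.
Proof. by apply: dot_isometry; rewrite trmxK mulmx1C. Qed.

(* Courant-Fischer: test both quadratic forms on a nonzero [y] in the span of the
   first k+1 columns of Q and orthogonal to the first k columns of V. *)
Lemma weyl_ge (k : 'I_K) : r k + s - mu (widen_ord hKd k) <= opnorm (C - Sig).
Proof.
pose A := \matrix_(i, l) (V^T *m Q) (widen_ord hKd i) l.
have [c [c_neq0 Ac_head c_tail]] := exists_kernel_vector_head k A.
set y := Q *m c.
have yy : dot y y = dot c c := dot_isometry hQ c.
have y_neq0 : y != 0 by rewrite -dotvv_eq0 yy dotvv_eq0.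
rewrite -opnormN opprB; apply: (quad_gap_le y_neq0).
  rewrite quad_spiked_cov /y mulmxA hQ mul1mx -/y yy mulrDl lerD2r dotvv.
  exact: sum_sorted_ge_head.
rewrite quad_conj_diag -dot_trV dotvv.
apply: sum_sorted_le_tail => // p pk.
have pK : (p < K)%N := ltn_trans pk (ltn_ord k).
rewrite -(Ac_head (Ordinal pK)) // /y mulmxA !mxE.
rewrite [in LHS](_ : p = widen_ord hKd (Ordinal pK)); last exact: val_inj.
by apply: eq_bigr => l _; rewrite [A _ l]mxE.
Qed.

Lemma weyl_le (k : 'I_K) : mu (widen_ord hKd k) - (r k + s) <= opnorm (C - Sig).
Proof.
pose A : 'M[R]_d := \matrix_(i, l) (Q^T *m V) (insubd k i) l.
have [c [c_neq0 Ac_head c_tail]] := exists_kernel_vector_head (widen_ord hKd k) A.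
set y := V *m c.
have yy : dot y y = dot c c := dot_isometry hV c.
have y_neq0 : y != 0 by rewrite -dotvv_eq0 yy dotvv_eq0.
apply: (quad_gap_le y_neq0).
  rewrite quad_conj_diag /y mulmxA hV mul1mx -/y yy dotvv.
  exact: sum_sorted_ge_head.
rewrite quad_spiked_cov mulrDl lerD2r.
apply: (le_trans (sum_sorted_le_tail (k := k) (u := fun l => (Q^T *m y) l 0) r_sorted _)).
  move=> l lk; rewrite -(Ac_head (widen_ord hKd l)) // /y mulmxA [LHS]mxE [RHS]mxE.
  apply: eq_bigr => j _; rewrite [A _ j]mxE (_ : insubd k _ = l) //.
  by apply: val_inj; rewrite val_insubd /= ltn_ord.
by rewrite -dotvv ler_wpM2l ?bessel.
Qed.

Lemma weyl (k : 'I_K) : `|mu (widen_ord hKd k) - (r k + s)| <= opnorm (C - Sig).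
Proof. by rewrite ler_norml weyl_le andbT lerNl opprB weyl_ge. Qed.

End Weyl.

Section SinTheta.
Variables (R : realType) (d K : nat) (Q : 'M[R]_(d, K)) (r : 'I_K -> R) (s : R).
Hypothesis hQ : Q^T *m Q = 1%:M.

Notation Sig := (spiked_cov Q r s).

Lemma sqr_spiked_residual (x : 'cV[R]_d) m : dot x x = 1 ->
  dot (Sig *m x - m *: x) (Sig *m x - m *: x) =
  \sum_l (r l + s - m) ^+ 2 * (Q^T *m x) l 0 ^+ 2
    + (s - m) ^+ 2 * (1 - \sum_l (Q^T *m x) l 0 ^+ 2).
Proof.
move=> x1; set c := Q^T *m x; set u := diag_mx (\row_l r l) *m c.
have -> : Sig *m x - m *: x = Q *m u + (s - m) *: x.
  by rewrite mulmxDl mul_scalar_mx -!mulmxA scalerBl addrA.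
have xQu : dot x (Q *m u) = \sum_l r l * c l 0 ^+ 2 by rewrite dot_mulmx dot_diag_mx.
rewrite dotDl !dotDr dot_isometry // !dotZl !dotZr x1 (dotC (Q *m u)) xQu.
have -> : dot u u = \sum_l r l ^+ 2 * c l 0 ^+ 2.
  by rewrite dotvv; apply: eq_bigr => l _; rewrite /u mul_diag_mx !mxE exprMn.
have -> : \sum_l (r l + s - m) ^+ 2 * c l 0 ^+ 2 = \sum_l r l ^+ 2 * c l 0 ^+ 2
    + 2 * (s - m) * \sum_l r l * c l 0 ^+ 2 + (s - m) ^+ 2 * \sum_l c l 0 ^+ 2.
  by rewrite !mulr_sumr -!big_split; apply: eq_bigr => l _ /=; ring.
ring.
Qed.

Lemma sin_theta (x : 'cV[R]_d) m gam (k : 'I_K) : dot x x = 1 ->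
  gam ^+ 2 <= (s - m) ^+ 2 ->
  (forall l, l != k -> gam ^+ 2 <= (r l + s - m) ^+ 2) ->
  gam ^+ 2 * (1 - (Q^T *m x) k 0 ^+ 2) <= dot (Sig *m x - m *: x) (Sig *m x - m *: x).
Proof.
move=> x1 gam_le gam_le_other; rewrite sqr_spiked_residual //.
set c := Q^T *m x.
have c_le1 : \sum_l c l 0 ^+ 2 <= 1 by rewrite -dotvv -x1 bessel.
have other : gam ^+ 2 * \sum_(l | l != k) c l 0 ^+ 2
    <= \sum_(l | l != k) (r l + s - m) ^+ 2 * c l 0 ^+ 2.
  rewrite mulr_sumr; apply: ler_sum => l lk.
  by apply: ler_wpM2r; [exact: sqr_ge0 | exact: gam_le_other].
have rest : gam ^+ 2 * (1 - \sum_l c l 0 ^+ 2) <= (s - m) ^+ 2 * (1 - \sum_l c l 0 ^+ 2).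
  by apply: ler_wpM2r; rewrite ?subr_ge0.
have ck := mulr_ge0 (sqr_ge0 (r k + s - m)) (sqr_ge0 (c k 0)).
rewrite (bigD1 k) //=; move: rest; rewrite (bigD1 k) //=; lra.
Qed.

End SinTheta.

Section AlignmentArith.
Variable R : realFieldType.

Lemma sqr_gap_le (u w g e : R) :
  0 <= g - e -> g <= `|u| -> `|w| <= e -> (g - e) ^+ 2 <= (u + w) ^+ 2.
Proof.
move=> ge_pos u_ge w_le; have := lerB_normD u w.
rewrite -[(u + w) ^+ 2]real_normK ?num_real //; have := normr_ge0 (u + w); nra.
Qed.

(* For g <= 2e the bound is trivial; otherwise g^2 <= 4 (g - e)^2 and
   1 - |c| <= 1 - c^2. *)
Lemma cos_bound_of_sin_theta (c g e : R) : 0 < g -> 0 <= e -> c ^+ 2 <= 1 ->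
  (2 * e < g -> (g - e) ^+ 2 * (1 - c ^+ 2) <= e ^+ 2) ->
  (2 - 2 * `|c|) * g ^+ 2 <= 8 * e ^+ 2.
Proof.
move=> g_gt0 e_ge0; rewrite -real_normK ?num_real // => c_le1 hsin.
have c0 := normr_ge0 c; have c1 : `|c| <= 1 by nra.
have [small|big] := ltP (2 * e) g; last by nra.
have := hsin small.
have gap : g ^+ 2 <= 4 * (g - e) ^+ 2 by nra.
have : (2 - 2 * `|c|) * g ^+ 2 <= 2 * (1 - `|c| ^+ 2) * (4 * (g - e) ^+ 2).
  apply: le_trans (_ : _ <= 2 * (1 - `|c| ^+ 2) * g ^+ 2) _.
    by apply: ler_wpM2r; [exact: sqr_ge0 | nra].
  by apply: ler_wpM2l => //; nra.
nra.
Qed.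

End AlignmentArith.

Section StiefelDistance.
Variable R : realType.

Lemma frob_sqr d K (A : 'M[R]_(d, K)) : frob A ^+ 2 = \sum_j dot (col j A) (col j A).
Proof.
rewrite /frob sqr_sqrtr; last first.
  by apply: sumr_ge0 => i _; apply: sumr_ge0 => j _; apply: sqr_ge0.
rewrite exchange_big; apply: eq_bigr => j _.
by rewrite dotvv; apply: eq_bigr => i _; rewrite mxE.
Qed.

Lemma dot_col_stiefel d K (X : 'M[R]_(d, K)) k : stiefel X -> dot (col k X) (col k X) = 1.
Proof. by move=> hX; rewrite dot_col hX mxE eqxx. Qed.

Lemma dF_sqr_le_cos d K (X Q : 'M[R]_(d, K)) : stiefel X -> stiefel Q ->
  dF X Q ^+ 2 <= \sum_k (2 - 2 * `|dot (col k X) (col k Q)|).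
Proof.
move=> hX hQ.
pose sg : {ffun 'I_K -> bool} := [ffun k => dot (col k X) (col k Q) < 0].
have dF_ge0 : 0 <= dF X Q by apply/bigmin_geP; split => [|s _]; apply: sqrtr_ge0.
apply: le_trans (_ : _ <= frob (X - Q *m signmx R sg) ^+ 2) _.
  by rewrite lerXn2r ?nnegrE ?sqrtr_ge0 //; apply: bigmin_le.
rewrite frob_sqr; apply: ler_sum => k _.
set t : R := if sg k then -1 else 1.
have -> : col k (X - Q *m signmx R sg) = col k X - t *: col k Q.
  by apply/matrixP => i z; rewrite /signmx mul_mx_diag !mxE mulrC.
rewrite dotBl !dotBr !dotZl !dotZr !dot_col_stiefel // (dotC (col k Q)).
rewrite /t /sg ffunE; case: ltP => c_sign.
  by rewrite ltr0_norm //; lra.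
by rewrite ger0_norm //; lra.
Qed.

End StiefelDistance.

Section Alignment.
Variables (R : realType) (d K : nat) (hKd : (K <= d)%N).
Variables (Q : 'M[R]_(d, K)) (r g : 'I_K -> R) (s : R).
Variables (V : 'M[R]_d) (mu : 'I_d -> R) (X : 'M[R]_(d, K)).
Hypothesis hQ : stiefel Q.
Hypothesis hV : V^T *m V = 1%:M.
Hypothesis r_sorted : forall i j : 'I_K, (i <= j)%N -> r j <= r i.
Hypothesis mu_sorted : forall i j : 'I_d, (i <= j)%N -> mu j <= mu i.
Hypothesis hX : forall (i : 'I_d) (j : 'I_K), X i j = V i (widen_ord hKd j).
Hypothesis g_gt0 : forall k, 0 < g k.
Hypothesis g_le : forall k, g k <= r k.
Hypothesis g_le_gap : forall k l, l != k -> g k <= `|r l - r k|.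

Notation C := (V *m diag_mx (\row_i mu i) *m V^T).
Notation Sig := (spiked_cov Q r s).

Let r_ge0 k : 0 <= r k.
Proof. exact: le_trans (ltW (g_gt0 k)) (g_le k). Qed.

Lemma col_principal k : col k X = col (widen_ord hKd k) V.
Proof. by apply/matrixP => i z; rewrite !mxE hX. Qed.

Lemma stiefel_principal : stiefel X.
Proof.
by apply/matrixP => i j; rewrite -dot_col !col_principal dot_col hV !mxE.
Qed.

Lemma principal_eigen (j : 'I_d) : C *m col j V = mu j *: col j V.
Proof.
rewrite colE -!mulmxA (mulmxA V^T) hV mul1mx mul_diag_mx scalemxAr; congr (_ *m _).
by apply/matrixP => p q; rewrite !mxE; case: (eqVneq p j) => [->|_]; rewrite ?mulr0.
Qed.

Lemma column_alignment k :
  (2 - 2 * `|dot (col k X) (col k Q)|) * g k ^+ 2 <= 8 * opnorm (C - Sig) ^+ 2.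
Proof.
set x := col k X; set e := opnorm (C - Sig); set m := mu (widen_ord hKd k).
have x1 : dot x x = 1 := dot_col_stiefel k stiefel_principal.
have cosE : dot x (col k Q) = (Q^T *m x) k 0 by rewrite colE dot_mulmx dot_delta_mxr.
have eig_near : `|r k + s - m| <= e by rewrite distrC; exact: weyl.
apply: cos_bound_of_sin_theta (g_gt0 k) (opnorm_ge0 _) _ _.
  have := cauchy_schwarz x (col k Q); rewrite x1 dot_col_stiefel // mulr1.
  by rewrite -real_normK ?num_real // normr_id real_normK ?num_real.
move=> small; rewrite cosE -/e in small *; have e_ge0 : 0 <= e := opnorm_ge0 _.
have resid : dot (Sig *m x - m *: x) (Sig *m x - m *: x) <= e ^+ 2.
  have <- : - ((C - Sig) *m x) = Sig *m x - m *: x.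
    by rewrite mulmxBl opprB /x col_principal principal_eigen.
  rewrite dotNl dotC dotNl opprK.
  by have := dotvv_mulmx_le (C - Sig) x; rewrite x1 mulr1.
apply: le_trans resid; apply: sin_theta => // [|l lk].
  rewrite (_ : s - m = - r k + (r k + s - m)); last by ring.
  by apply: sqr_gap_le => //; [lra | rewrite normrN ger0_norm ?g_le].
rewrite (_ : r l + s - m = (r l - r k) + (r k + s - m)); last by ring.
by apply: sqr_gap_le => //; [lra | exact: g_le_gap].
Qed.

Lemma dF_principal_eigvecs_le :
  dF X Q ^+ 2 <= 8 * opnorm (C - Sig) ^+ 2 * \sum_k (g k ^+ 2)^-1.
Proof.
apply: le_trans (dF_sqr_le_cos stiefel_principal hQ) _.
rewrite mulr_sumr; apply: ler_sum => k _.
by rewrite ler_pdivlMr ?exprn_gt0 ?g_gt0 // column_alignment.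
Qed.

End Alignment.

Section Gaps.
Variables (R : realType) (K : nat) (lam : nat -> R).
Hypothesis lam_decr : forall k, (1 <= k < K)%N -> lam k.+1 < lam k.
Hypothesis lamK_gt0 : 0 < lam K.

Lemma lam_nonincr i j : (1 <= i)%N -> (i <= j <= K)%N -> lam j <= lam i.
Proof.
move=> i1 /andP[ij jK]; pose D := [pred n | 1 <= n <= K]%N.
apply: (@homo_leq_in _ D lam (fun x y => y <= x) _ _ _ _ i j _ _ ij); rewrite ?inE.
- exact: lexx.
- by move=> y x z yx zy; apply: le_trans zy yx.
- by move=> a b /andP[a1 _] /andP[_ bK] c /andP[ac cb]; apply/andP; lia.
- by move=> n /andP[n1 _] /andP[_ nK]; apply/ltW/lam_decr; rewrite n1.
- by rewrite i1 (leq_trans ij jK).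
- by rewrite jK (leq_trans i1 ij).
Qed.

Lemma lam_gt0 i : (1 <= i <= K)%N -> 0 < lam i.
Proof.
by case/andP=> i1 iK; apply: lt_le_trans lamK_gt0 (lam_nonincr i1 _); rewrite iK leqnn.
Qed.

Lemma gapmin_gt0 (k : 'I_K) : 0 < gapmin K lam k.+1.
Proof.
have kK := ltn_ord k.
have next_gt0 : 0 < lam k.+1 - (if k.+1 == K then 0 else lam k.+2).
  case: ifP => [_|/negbT k1K]; first by rewrite subr0 lam_gt0.
  have k2K : (k.+2 <= K)%N by rewrite ltn_neqAle k1K.
  by rewrite subr_gt0 lam_decr.
rewrite /gapmin; case: ifP => // /negbT k1.
by rewrite lt_min next_gt0 andbT subr_gt0 lam_decr // kK andbT lt0n.
Qed.

Lemma gapmin_le (k : 'I_K) : gapmin K lam k.+1 <= lam k.+1.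
Proof.
have next_le : lam k.+1 - (if k.+1 == K then 0 else lam k.+2) <= lam k.+1.
  case: ifP => [_|/negbT k1K]; first by rewrite subr0.
  have k2K : (k.+2 <= K)%N by rewrite ltn_neqAle k1K ltn_ord.
  by rewrite lerBlDr lerDl ltW // lam_gt0.
rewrite /gapmin; case: ifP => // _; apply: le_trans next_le; by rewrite ge_min lexx orbT.
Qed.

Lemma gapmin_le_dist (k l : 'I_K) :
  l != k -> gapmin K lam k.+1 <= `|lam l.+1 - lam k.+1|.
Proof.
rewrite neq_ltn => /orP[lk|kl].
  have le_prev : gapmin K lam k.+1 <= lam k - lam k.+1.
    by rewrite /gapmin ifN ?ge_min ?lexx // -lt0n (leq_ltn_trans _ lk).
  have kl1 : lam k <= lam l.+1 by apply: lam_nonincr => //; rewrite lk ltnW.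
  by apply: le_trans (ler_norm _); lra.
have kK : (k.+1 < K)%N := leq_ltn_trans kl (ltn_ord l).
have le_next : gapmin K lam k.+1 <= lam k.+1 - lam k.+2.
  by rewrite /gapmin /= (ltn_eqF kK); case: ifP => // _; rewrite ge_min lexx orbT.
have lk1 : lam l.+1 <= lam k.+2 by apply: lam_nonincr => //; rewrite ltnS kl ltn_ord.
by rewrite distrC; apply: le_trans (ler_norm _); lra.
Qed.

End Gaps.

Lemma Theta_sqr (R : realType) K (lam : nat -> R) : (forall k : 'I_K, 0 <= lam k.+1) ->
  Theta K lam *m Theta K lam = diag_mx (\row_k lam k.+1).
Proof.
move=> lam_ge0; rewrite /Theta mul_diag_mx; apply/matrixP => i j; rewrite !mxE.
by case: (eqVneq i j) => [->|_]; rewrite ?mulr0n ?mulr0 // !mulr1n -expr2 sqr_sqrtr.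
Qed.

Theorem lemma9 (R : realType) (d K L : nat) (nl : nat -> nat)
    (lam v : nat -> R) (Q : 'M[R]_(d, K))
    (z : nat -> nat -> 'cV[R]_K) (eta : nat -> nat -> 'cV[R]_d)
    (delta etab beta3 : R) (X0 : 'M[R]_(d, K))
    (hK1 : (1 <= K)%N) (hKd : (K < d)%N) (hL : (1 <= L)%N)
    (hnl : forall l, (1 <= l <= L)%N -> (1 <= nl l)%N)
    (hQ : stiefel Q)
    (hlam : forall k, (1 <= k < K)%N -> lam k.+1 < lam k)
    (hlamK : 0 < lam K)
    (hv : forall l, (1 <= l < L)%N -> v l.+1 < v l)
    (hvL : 0 < v L)
    (hdelta : 0 < delta < Num.sqrt 2 / 2)
    (hdelta2 : 0 < lam K * ak L nl lam v K - lam 1 * ak L nl lam v 1 * delta)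
    (hetab : 0 < etab)
    (hetab2 : forall X : 'M[R]_(d, K), stiefel X ->
        etab * (dF X Q) ^+ 2 <= gfun L nl lam v Q Q - gfun L nl lam v Q X)
    (hbeta3 : 0 < beta3)
    (hbeta32 : forall X : 'M[R]_(d, K), stiefel X ->
        gfun L nl lam v Q Q - gfun L nl lam v Q X <= beta3 * (dF X Q) ^+ 2)
    (hX0 : principal_eigvecs (ltnW hKd) (Csample L nl Q lam z eta) X0)
    (hC : (opnorm (Csample L nl Q lam z eta - ECov L nl Q lam v)) ^+ 2
          <= (delta ^+ 2 * etab) /
             (8 * beta3 * \sum_(1 <= j < K.+1) ((gapmin K lam j) ^+ 2)^-1)) :
  gfun L nl lam v Q Q - gfun L nl lam v Q X0 <= delta ^+ 2 * etab.
Proof.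
(* Only the upper bound [hbeta32] on g(Q) - g(X) enters. *)
case: hX0 => V [mu [hV hCV mu_sorted hX0V]].
pose r (k : 'I_K) := lam k.+1; pose g (k : 'I_K) := gapmin K lam k.+1.
have r_ge0 k : 0 <= r k by rewrite ltW // (lam_gt0 hlam hlamK) // ltn_ord.
have r_sorted (i j : 'I_K) : (i <= j)%N -> r j <= r i.
  by move=> ij; apply: (lam_nonincr hlam); rewrite ?ltnS ?ij ?ltn_ord.
pose s := \sum_(1 <= l < L.+1) (nl l)%:R / (ntot L nl)%:R * v l.
have hdF := dF_principal_eigvecs_le s hQ hV r_sorted mu_sorted hX0V
  (gapmin_gt0 hlam hlamK) (gapmin_le hlam hlamK)
  (@gapmin_le_dist _ _ _ hlam hlamK).
rewrite -hCV /spiked_cov -Theta_sqr // -/(ECov L nl Q lam v) in hdF.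
have S_gt0 : 0 < \sum_k (g k ^+ 2)^-1.
  rewrite (bigD1 (Ordinal hK1)) //= ltr_wpDr ?sumr_ge0 // => [k _|].
    by rewrite invr_ge0 sqr_ge0.
  by rewrite invr_gt0 exprn_gt0 // gapmin_gt0.
rewrite big_add1 big_mkord /= ler_pdivlMr ?mulr_gt0 // in hC.
apply: le_trans (hbeta32 _ (stiefel_principal hV hX0V)) _.
have := ler_wpM2l (ltW hbeta3) hdF; lra.
Qed.
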